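(* (i) If $j\in A$, then $\lfloor(\varphi-1)(\lfloor\varphi j\rfloor+1)\rfloor=j$. (ii) If $j\in B$, then $\lfloor\varphi\lfloor(\varphi-1)j\rfloor\rfloor+1=j$.
   Context: $\mathbb N=\{1,2,\dots\}$, $\varphi=\frac{1+\sqrt5}{2}$, $A=\{\lfloor n\varphi\rfloor\mid n\in\mathbb N\}$ and $B=\{\lfloor n\varphi^2\rfloor\mid n\in\mathbb N\}$. *)

From mathcomp Require Import all_boot all_order all_algebra.
From mathcomp Require Import all_classical all_reals.
Set Implicit Arguments. Unset Strict Implicit. Unset Printing Implicit Defensive.
Import Order.TTheory GRing.Theory Num.Theory.
Local Open Scope ring_scope.

Definition phi (R : realType) : R := (1 + Num.sqrt 5) / 2.

Definition inA (R : realType) (j : int) : Prop :=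
  exists n : nat, (0 < n)%N /\ j = Num.floor (n%:R * phi R).

Definition inB (R : realType) (j : int) : Prop :=
  exists n : nat, (0 < n)%N /\ j = Num.floor (n%:R * (phi R) ^+ 2).

(* The inverse [phi - 1 = 1/phi] undoes multiplication by [phi] up to an error
   smaller than [phi - 1 < 1], which gives (i) for every integer [j].  For (ii),
   [phi^2 = phi + 1] gives [floor (n phi^2) = a + n] with [a = floor (n phi)];
   since [n phi] is irrational, [a < n phi < a + 1] strictly, and the same
   estimate yields [floor ((a + n)/phi) = a] and [floor (phi a) = a + n - 1]. *)
From mathcomp Require Import all_boot all_order all_algebra.
From mathcomp Require Import all_classical all_reals.
From mathcomp Require Import lra zify ring.
Import Order.TTheory GRing.Theory Num.Theory.
Local Open Scope ring_scope.

Lemma sqr_neq_prime_mul_sqr (p b n : nat) :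
  prime p -> (0 < n)%N -> (b ^ 2 != p * n ^ 2)%N.
Proof.
move=> p_pr n_gt0; apply/eqP => sqr_eq.
have : (0 < b ^ 2)%N by rewrite sqr_eq muln_gt0 prime_gt0 // expn_gt0 n_gt0.
rewrite expn_gt0 orbF => b_gt0.
have := congr1 (logn p) sqr_eq.
rewrite lognM ?(prime_gt0 p_pr) ?expn_gt0 ?n_gt0 // !lognX (logn_prime p p_pr) eqxx.
lia.
Qed.

Section GoldenRatio.

Variable R : realType.
Local Notation phi := (phi R).

Lemma sqr_sqrt5 : Num.sqrt (5 : R) ^+ 2 = 5.
Proof. by rewrite sqr_sqrtr // ler0n. Qed.

Lemma phi_sqr : phi ^+ 2 = phi + 1.
Proof. by rewrite /phi expr_div_n sqrrD sqr_sqrt5 expr1n; field. Qed.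

Lemma phi_gt1 : 1 < phi.
Proof. have := sqr_sqrt5; have := sqrtr_ge0 (5 : R); rewrite /phi expr2; nra. Qed.

Lemma phi_lt2 : phi < 2.
Proof. have := sqr_sqrt5; have := sqrtr_ge0 (5 : R); rewrite /phi expr2; nra. Qed.

Lemma natmul_phi_neq_int (n : nat) (a : int) : (0 < n)%N -> a%:~R != n%:R * phi.
Proof.
move=> n_gt0; apply/eqP => a_eq.
have sqrt5_eq : (2 * a - n%:Z)%:~R = n%:R * Num.sqrt (5 : R).
  by rewrite rmorphB rmorphM /= a_eq /phi -[(n%:Z)%:~R]/(n%:R : R); field.
have /eqP : ((2 * a - n%:Z) ^+ 2)%:~R = (5 * n%:Z ^+ 2)%:~R :> R.
  rewrite rmorphXn /= sqrt5_eq exprMn sqr_sqrt5 rmorphM rmorphXn /=.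
  by rewrite -[(n%:Z)%:~R]/(n%:R : R) mulrC.
rewrite eqr_int => /eqP sqr_eq.
have /negP := sqr_neq_prime_mul_sqr 5 (absz (2 * a - n%:Z)%R) n isT n_gt0.
by apply; rewrite -abszX sqr_eq abszM abszX.
Qed.

Lemma phiB1_mul_phi : (phi - 1) * phi = 1.
Proof. by rewrite mulrBl -expr2 phi_sqr mul1r addrAC subrr add0r. Qed.

Lemma floor_phiB1_mul_floor_phiD1 (j : int) :
  Num.floor ((phi - 1) * ((Num.floor (phi * j%:~R))%:~R + 1)) = j.
Proof.
have m_le := floor_le (phi * j%:~R); have := floorD1_gt (phi * j%:~R).
rewrite intrD; set m := (Num.floor _)%:~R in m_le *; set x := j%:~R in m_le * => m_gt.
have phiB1_phi_x : (phi - 1) * (phi * x) = x by rewrite mulrA phiB1_mul_phi mul1r.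
have lower : 0 < (phi - 1) * (m + 1 - phi * x) by rewrite mulr_gt0 ?subr_gt0 ?phi_gt1.
have upper : 0 <= (phi - 1) * (phi * x - m) by rewrite mulr_ge0 ?subr_ge0 ?(ltW phi_gt1).
have phi_lt2 := phi_lt2.
apply: floor_def; rewrite intrD -/x; apply/andP; split; nra.
Qed.

Lemma mulr_phi_phi (x : R) : x * phi * phi = x * phi + x.
Proof. by rewrite -mulrA -expr2 phi_sqr mulrDr mulr1. Qed.

Lemma floor_natmul_phi_sqr (n : nat) :
  Num.floor (n%:R * phi ^+ 2) = Num.floor (n%:R * phi) + n%:Z.
Proof.
rewrite expr2 mulrA mulr_phi_phi floorDrz ?natr_int //.
by rewrite -[n%:R]/((n%:Z)%:~R : R) intrKfloor.
Qed.

Section FloorNatmulPhi.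

Variables (n : nat) (n_gt0 : (0 < n)%N).
Local Notation a := (Num.floor (n%:R * phi)).

Lemma floor_natmul_phi_bounds : a%:~R < n%:R * phi < a%:~R + 1.
Proof.
rewrite lt_neqAle floor_le natmul_phi_neq_int //=.
by rewrite -[1]/(1%:~R : R) -intrD floorD1_gt.
Qed.

Lemma floor_phiB1_mul_floor_natmul_phi_sqr :
  Num.floor ((phi - 1) * (Num.floor (n%:R * phi ^+ 2))%:~R) = a.
Proof.
have /andP[a_lt a_gt] := floor_natmul_phi_bounds.
have n_phi_phi := mulr_phi_phi n%:R.
have phi_gt1 := phi_gt1; have phi_lt2 := phi_lt2.
have lower : 0 < (2 - phi) * (n%:R * phi - a%:~R) by rewrite mulr_gt0 ?subr_gt0.
have upper : 0 < (2 - phi) * (a%:~R + 1 - n%:R * phi) by rewrite mulr_gt0 ?subr_gt0.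
rewrite floor_natmul_phi_sqr; apply: floor_def.
rewrite !intrD -[(n%:Z)%:~R]/(n%:R : R); apply/andP; split; nra.
Qed.

Lemma floor_phi_mul_floor_natmul_phi :
  Num.floor (phi * a%:~R) = a + n%:Z - 1.
Proof.
have /andP[a_lt a_gt] := floor_natmul_phi_bounds.
have n_phi_phi := mulr_phi_phi n%:R.
have phi_gt1 := phi_gt1; have phi_lt2 := phi_lt2.
have lower : 0 < (phi - 1) * (a%:~R + 1 - n%:R * phi) by rewrite mulr_gt0 ?subr_gt0.
have upper : 0 < (phi - 1) * (n%:R * phi - a%:~R) by rewrite mulr_gt0 ?subr_gt0.
apply: floor_def; rewrite !intrD intrN -[(n%:Z)%:~R]/(n%:R : R).
apply/andP; split; nra.
Qed.

End FloorNatmulPhi.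

End GoldenRatio.

Theorem proposition5p6 (R : realType) :
  (forall j : int, inA R j ->
     Num.floor ((phi R - 1) * ((Num.floor (phi R * j%:~R))%:~R + 1)) = j) /\
  (forall j : int, inB R j ->
     Num.floor (phi R * (Num.floor ((phi R - 1) * j%:~R))%:~R) + 1 = j).
Proof.
split=> [j _ | _ [n [n_gt0 ->]]]; first exact: floor_phiB1_mul_floor_phiD1.
rewrite floor_phiB1_mul_floor_natmul_phi_sqr // floor_phi_mul_floor_natmul_phi //.
by rewrite floor_natmul_phi_sqr subrK.
Qed.
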